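(* Let $n\ge2$ and let $\Pi$ be an $(n-1,n)$-Dyck path. A cell $c\in\lambda(\Pi)$ satisfies \[ \frac{\operatorname{arm}(c)}{\operatorname{leg}(c)}\le\frac{n-1}{n}<\frac{\operatorname{arm}(c)+1}{\operatorname{leg}(c)+1} \] (with $\frac00=0$ and $\frac x0=\infty$ for $x\ne0$) if and only if its south and east borders are both steps of $\Pi$, i.e. if and only if $\operatorname{arm}(c)=\operatorname{leg}(c)=0$.
   Context: An $(n-1,n)$-Dyck path is a lattice path from $(0,0)$ to $(n-1,n)$ of unit north and east steps staying weakly above the line $y=\frac{n}{n-1}x$. $\lambda(\Pi)$ is the set of unit cells of the rectangle $[0,n-1]\times[0,n]$ lying above (northwest of) $\Pi$. For $c\in\lambda(\Pi)$, $\operatorname{arm}(c)$ is the number of cells of $\lambda(\Pi)$ strictly east of $c$ in its row and $\operatorname{leg}(c)$ the number of cells of $\lambda(\Pi)$ strictly south of $c$ in its column. *)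

From mathcomp Require Import all_boot all_order all_algebra.
Set Implicit Arguments. Unset Strict Implicit. Unset Printing Implicit Defensive.
Import Order.TTheory GRing.Theory Num.Theory.

(* A lattice path is a sequence of steps: true = North (0,1), false = East (1,0). *)

Definition ptx (P : seq bool) (k : nat) : nat := count negb (take k P).
Definition pty (P : seq bool) (k : nat) : nat := count id (take k P).

(* (n-1,n)-Dyck path: from (0,0) to (n-1,n), staying weakly above y = n/(n-1) x,
   i.e. every lattice point (x,y) on it satisfies n*x <= (n-1)*y (checking the
   vertices suffices since the region above the line is convex). *)
Definition dyck (n : nat) (P : seq bool) : bool :=
  [&& count negb P == n.-1, count id P == n &
      all (fun k => n * ptx P k <= n.-1 * pty P k) (iota 0 (size P).+1)].

(* The unit cell c = (i,j) is the square [i,i+1] x [j,j+1].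
   It lies in lambda(P) (inside the rectangle [0,n-1]x[0,n] and above/northwest of P)
   iff the path passes through a point weakly southeast of its SE corner (i+1,j). *)
Definition in_lambda (n : nat) (P : seq bool) (i j : nat) : bool :=
  [&& i < n.-1, j < n &
      has (fun k => (i.+1 <= ptx P k) && (pty P k <= j)) (iota 0 (size P).+1)].

Definition arm (n : nat) (P : seq bool) (i j : nat) : nat :=
  \sum_(i.+1 <= i' < n.-1) (in_lambda n P i' j : nat).

Definition leg (n : nat) (P : seq bool) (i j : nat) : nat :=
  \sum_(0 <= j' < j) (in_lambda n P i j' : nat).

(* Extended nonnegative rationals: None = infinity.
   efrac a b = a/b with the conventions 0/0 = 0 and x/0 = infinity for x <> 0. *)
Definition efrac (a b : nat) : option rat :=
  if b == 0%N then (if a == 0%N then Some 0%R else None)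
  else Some (a%:R / b%:R)%R.

Definition le_ext (x y : option rat) : bool :=
  match x, y with
  | _, None => true
  | None, Some _ => false
  | Some a, Some b => (a <= b)%R
  end.

Definition lt_ext (x y : option rat) : bool :=
  match x, y with
  | None, _ => false
  | Some _, None => true
  | Some a, Some b => (a < b)%R
  end.

(* Step k of P goes from point k to point k+1. *)
Definition south_border_step (P : seq bool) (i j : nat) : bool :=
  has (fun k => [&& ptx P k == i, pty P k == j & ~~ nth true P k]) (iota 0 (size P)).

Definition east_border_step (P : seq bool) (i j : nat) : bool :=
  has (fun k => [&& ptx P k == i.+1, pty P k == j & nth false P k]) (iota 0 (size P)).

(* Arithmetic: as leg(c) < n and gcd(n-1, n) = 1, the window
   a/l <= (n-1)/n < (a+1)/(l+1) forces a n = (n-1) l when l > 0, so n divides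
   l, which is impossible; for l = 0 it holds exactly when a = 0.
   Combinatorics: arm(c) = 0 and leg(c) = 0 say that the cells just east and
   just south of c = (i,j) are not in lambda.  The path is monotone, so no
   point of it lies strictly southeast of another; hence the two border steps
   keep those cells out of lambda.  Conversely, the first east step reaching
   column i+1 must be the south border of c (else the cell south of c is in
   lambda), and the next step must go north (else the cell east of c is).
   Only the endpoint (n-1, n) of the path is used, not its staying above the
   diagonal. *)

From mathcomp Require Import all_boot all_order all_algebra.
From mathcomp Require Import zify.
Import Order.TTheory GRing.Theory Num.Theory.

Set Implicit Arguments.
Unset Strict Implicit.
Unset Printing Implicit Defensive.

Section PathPoints.

Variable P : seq bool.

Lemma ptx0 : ptx P 0 = 0. Proof. by rewrite /ptx take0. Qed.

Lemma ptxS k : k < size P -> ptx P k.+1 = ptx P k + ~~ nth true P k.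
Proof. by move=> lt_k; rewrite /ptx (take_nth true lt_k) -cats1 count_cat /= addn0. Qed.

Lemma ptyS k : k < size P -> pty P k.+1 = pty P k + nth true P k.
Proof. by move=> lt_k; rewrite /pty (take_nth true lt_k) -cats1 count_cat /= addn0. Qed.

Lemma count_take_mono (a : pred bool) k k' :
  k <= k' -> count a (take k P) <= count a (take k' P).
Proof.
move=> le_kk'; rewrite -(take_takel P le_kk').
by rewrite -{2}(cat_take_drop k (take k' P)) count_cat leq_addr.
Qed.

Lemma ptx_mono k k' : k <= k' -> ptx P k <= ptx P k'.
Proof. exact: count_take_mono. Qed.

Lemma pty_mono k k' : k <= k' -> pty P k <= pty P k'.
Proof. exact: count_take_mono. Qed.

Lemma ptx_le_count k : ptx P k <= count negb P.
Proof.
by rewrite -{2}(take_oversize (leq_addl k (size P))) count_take_mono ?leq_addr.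
Qed.

Lemma path_point_not_southeast k m :
  ptx P k < ptx P m -> pty P m < pty P k -> False.
Proof.
case: (leqP m k) => [le_mk | /ltnW le_km].
  by have := ptx_mono le_mk; lia.
by have := pty_mono le_km; lia.
Qed.

Lemma ptx_crossing k0 x : k0 <= size P -> x < ptx P k0 ->
  exists2 k, k < k0 & ptx P k = x /\ nth true P k = false.
Proof.
elim: k0 => [|k IH] le_k0; first by rewrite ptx0.
have lt_k : k < size P by [].
rewrite ptxS //; case: (ltnP x (ptx P k)) => [/(IH (ltnW lt_k)) [k' lt_k' xk'] _|le_x].
  by exists k'; first exact: ltnW.
by move=> lt_x; exists k => //; move: lt_x; case: (nth true P k) => /=; lia.
Qed.

End PathPoints.

Section Lambda.

Variables (n : nat) (P : seq bool).

Lemma in_lambda_northwest i j i' j' : i <= i' -> j' <= j -> j < n ->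
  in_lambda n P i' j' -> in_lambda n P i j.
Proof.
move=> le_i le_j lt_j /and3P[lt_i' _ /hasP[k k_in /andP[xk yk]]].
apply/and3P; split; [lia | by [] | apply/hasP; exists k => //].
by apply/andP; split; lia.
Qed.

Lemma in_lambda_of_point k i j : i < n.-1 -> j < n -> k <= size P ->
  i < ptx P k -> pty P k <= j -> in_lambda n P i j.
Proof.
move=> lt_i lt_j le_k xk yk; apply/and3P; split => //.
by apply/hasP; exists k; rewrite ?mem_iota ?xk ?yk //; lia.
Qed.

Lemma notin_lambda_northwest k i j :
  ptx P k <= i -> j < pty P k -> ~~ in_lambda n P i j.
Proof.
move=> xk yk; apply/negP => /and3P[_ _ /hasP[m _ /andP[xm ym]]].
by apply: (@path_point_not_southeast P k m); lia.
Qed.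

Lemma border_steps_notin_lambda i j :
  south_border_step P i j -> east_border_step P i j ->
  ~~ in_lambda n P i.+1 j /\ (0 < j -> ~~ in_lambda n P i j.-1).
Proof.
move=> /hasP[k _ /and3P[/eqP xk /eqP yk _]].
move=> /hasP[k' /[!mem_iota] /andP[_ lt_k'] /and3P[/eqP xk' /eqP yk' north_k']].
split=> [|pos_j]; last by apply: (notin_lambda_northwest (k := k)); lia.
apply: (notin_lambda_northwest (k := k'.+1)).
  by rewrite ptxS // (set_nth_default false) // north_k' xk' addn0.
by rewrite ptyS // (set_nth_default false) // north_k' yk' addn1.
Qed.

Lemma notin_lambda_border_steps i j :
  count negb P = n.-1 -> count id P = n -> in_lambda n P i j ->
  ~~ in_lambda n P i.+1 j -> (0 < j -> ~~ in_lambda n P i j.-1) ->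
  south_border_step P i j && east_border_step P i j.
Proof.
move=> cnt_east cnt_north /and3P[lt_i lt_j /hasP[k0 /[!mem_iota] /andP[_ le_k0]]].
move=> /andP[xk0 yk0] notin_east notin_south.
have [k lt_kk0 [xk east_k]] := ptx_crossing le_k0 xk0.
have lt_k : k < size P by lia.
have xk1 : ptx P k.+1 = i.+1 by rewrite ptxS // east_k xk addn1.
have yk1 : pty P k.+1 = pty P k by rewrite ptyS // east_k addn0.
have yk : pty P k = j.
  have le_yk : pty P k <= j by rewrite -yk1; exact: leq_trans (pty_mono P lt_kk0) yk0.
  apply/eqP; rewrite eqn_leq le_yk leqNgt; apply/negP => lt_yk.
  have := notin_south (leq_ltn_trans (leq0n _) lt_yk).
  by rewrite (in_lambda_of_point (k := k.+1)) //; lia.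
have lt_k1 : k.+1 < size P.
  rewrite ltn_neqAle lt_k andbT; apply: contraTneq lt_j => end_k1.
  by rewrite -cnt_north -yk -yk1 end_k1 /pty take_size ltnn.
apply/andP; split; apply/hasP.
  by exists k; rewrite ?mem_iota ?add0n ?lt_k ?xk ?yk ?east_k ?eqxx.
exists k.+1; rewrite ?mem_iota ?add0n ?lt_k1 ?xk1 ?yk1 ?yk ?eqxx //=.
case north_k1: (nth false P k.+1) => //; apply: contraNT notin_east => _.
have xk2 : ptx P k.+2 = i.+2.
  by rewrite ptxS // xk1 (set_nth_default false) // north_k1 addn1.
have yk2 : pty P k.+2 = j.
  by rewrite ptyS // yk1 yk (set_nth_default false) // north_k1 addn0.
have := ptx_le_count P k.+2; rewrite xk2 cnt_east => le_i2.
by apply: (in_lambda_of_point (k := k.+2)); rewrite ?xk2 ?yk2 //; lia.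
Qed.

Lemma arm_eq0 i j : arm n P i j = 0 <-> ~~ in_lambda n P i.+1 j.
Proof.
rewrite /arm; split => [arm0 | notin].
  apply/negP => in_i1; have [lt_i1 _ _] := and3P in_i1.
  by move: arm0; rewrite big_ltn // in_i1 add1n.
rewrite big_nat big1 // => i' /andP[lt_i' _]; apply/eqP; rewrite eqb0.
apply: contra notin => in_i'; have [_ lt_j _] := and3P in_i'.
exact: in_lambda_northwest in_i'.
Qed.

Lemma leg_eq0 i j : j < n ->
  leg n P i j = 0 <-> (0 < j -> ~~ in_lambda n P i j.-1).
Proof.
rewrite /leg; case: j => [|j] lt_j; first by rewrite big_geq.
rewrite big_nat_recr //=; split => [/eqP | notin].
  by rewrite addn_eq0 eqb0 => /andP[_ notin _].
rewrite (negbTE (notin isT)) addn0 big_nat big1 // => j' /andP[_ lt_j'].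
apply/eqP; rewrite eqb0; apply: contra (notin isT).
by apply: in_lambda_northwest; lia.
Qed.

Lemma leg_leq i j : leg n P i j <= j.
Proof.
rewrite /leg -{2}[j]subn0 -[j - 0]muln1 -sum_nat_const_nat.
by apply: leq_sum => j' _; apply: leq_b1.
Qed.

Lemma border_steps_iff_arm_leg_eq0 i j :
  count negb P = n.-1 -> count id P = n -> in_lambda n P i j ->
  south_border_step P i j && east_border_step P i j <->
  arm n P i j = 0 /\ leg n P i j = 0.
Proof.
move=> cnt_east cnt_north in_ij; have [_ lt_j _] := and3P in_ij.
rewrite arm_eq0 (leg_eq0 i lt_j); split.
  by case/andP; apply: border_steps_notin_lambda.
by case; exact: notin_lambda_border_steps.
Qed.

End Lambda.

Lemma le_ext_efrac a b c d : 0 < b -> 0 < d ->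
  le_ext (efrac a b) (efrac c d) = (a * d <= c * b).
Proof.
move=> pos_b pos_d; rewrite /efrac !gtn_eqF //=.
by rewrite ler_pdivrMr ?ltr0n // mulrAC ler_pdivlMr ?ltr0n // -!natrM ler_nat.
Qed.

Lemma lt_ext_efrac a b c d : 0 < b -> 0 < d ->
  lt_ext (efrac a b) (efrac c d) = (a * d < c * b).
Proof.
move=> pos_b pos_d; rewrite /efrac !gtn_eqF //=.
by rewrite ltr_pdivrMr ?ltr0n // mulrAC ltr_pdivlMr ?ltr0n // -!natrM ltr_nat.
Qed.

Lemma muln_neq_pred_mul n a l : 0 < l < n -> a * n != n.-1 * l.
Proof.
case: n => [|m] /andP[pos_l lt_l] //=; apply: contraTneq lt_l => eq_am.
have : m.+1 %| m * l by rewrite -eq_am dvdn_mull.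
by rewrite Gauss_dvdr ?coprimeSn // => /(dvdn_leq pos_l); rewrite leqNgt.
Qed.

Lemma efrac_window_iff n a l : 2 <= n -> l < n ->
  le_ext (efrac a l) (efrac n.-1 n) && lt_ext (efrac n.-1 n) (efrac a.+1 l.+1)
  <-> a = 0 /\ l = 0.
Proof.
move=> le2n lt_l; have pos_n : 0 < n by lia.
case: l lt_l => [|l] lt_l.
  rewrite /efrac (gtn_eqF pos_n) /=; case: a => [|a] /=; last by split=> // -[].
  rewrite divr_ge0 ?ler0n //= divr1 ltr_pdivrMr ?ltr0n // mul1r ltr_nat.
  by split=> // _; lia.
rewrite le_ext_efrac // lt_ext_efrac //; split=> [/andP[le_an lt_an] | []//].
have : a * n != n.-1 * l.+1 by apply: muln_neq_pred_mul; rewrite lt_l.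
by nia.
Qed.

Theorem theorem6 (n : nat) (P : seq bool) (i j : nat) :
  (2 <= n)%N -> dyck n P -> in_lambda n P i j ->
  let cond :=
    le_ext (efrac (arm n P i j) (leg n P i j)) (efrac n.-1 n) &&
    lt_ext (efrac n.-1 n) (efrac (arm n P i j).+1 (leg n P i j).+1) in
  (cond <-> south_border_step P i j && east_border_step P i j) /\
  (cond <-> (arm n P i j = 0%N /\ leg n P i j = 0%N)).
Proof.
move=> le2n /and3P[/eqP cnt_east /eqP cnt_north _] in_ij cond.
have [_ lt_j _] := and3P in_ij.
have window : cond <-> arm n P i j = 0 /\ leg n P i j = 0.
  exact: efrac_window_iff le2n (leq_ltn_trans (leg_leq n P i j) lt_j).
have borders := border_steps_iff_arm_leg_eq0 cnt_east cnt_north in_ij.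
by split; [apply: iff_trans window (iff_sym borders) | exact: window].
Qed.
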